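(* Let $X$ be a compact Hausdorff space with its canonical uniform structure, $f\colon X\setminus I(f)\to X$ a partially continuous self-map, and $\xi,\xi'$ two admissible sequences for $(X,f)$. Let $\mathcal E,\mathcal E',\mathcal E''$ be symmetric entourages with $\mathcal E'\circ\mathcal E'\subseteq\mathcal E$ and $\mathcal E''\circ\mathcal E''\subseteq\mathcal E'$, and let $n\ge0$. Then (i) if $\xi_n\subseteq\xi'_n$, then $S(n,\xi,\mathcal E)\le S(n,\xi',\mathcal E)$; (ii) if $\overline{\xi_n}\subseteq\overline{\xi'_n}$, then $R(n,\xi,\mathcal E)\le R(n,\xi',\mathcal E'')$. In particular, if $\overline{\xi_n}\subseteq\overline{\xi'_n}$ for all sufficiently large $n$, then $h_{\mathrm{top}}(f,\xi)\le h_{\mathrm{top}}(f,\xi')$.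
   Context: A partially continuous self-map is a continuous $f\colon X\setminus I(f)\to X$ with $I(f)$ closed. Entourages of the canonical uniform structure are the neighbourhoods of the diagonal; $\mathcal E'\circ\mathcal E'=\{(x,y):\exists z,(x,z),(z,y)\in\mathcal E'\}$. An admissible sequence is a sequence $\xi=(\xi_n)_{n\ge0}$ of subsets of $X$ with $\xi_n\subseteq X\setminus I(f)$ and $f(\xi_n)\subseteq\xi_{n-1}$ for $n\ge1$. Let $\xi^{\max}_0=X$, $\xi^{\max}_n=\{x\in X\setminus I(f):f(x)\in\xi^{\max}_{n-1}\}$; for $x\in\xi^{\max}_n$, $B^n_{\mathcal E}(x)=\{y\in\xi^{\max}_n:(f^i(x),f^i(y))\in\mathcal E,0\le i\le n\}$. Points $x,y\in\xi_n$ are $(n,\xi,\mathcal E)$-separated if $x\notin B^n_{\mathcal E}(y)$; $F\subset\xi_n$ is $(n,\xi,\mathcal E)$-covering if $\xi_n\subseteq\bigcup_{x\in F}B^n_{\mathcal E}(x)$. $R(n,\xi,\mathcal E)$ is the minimal cardinality of a covering set, $S(n,\xi,\mathcal E)$ the maximal cardinality of a pairwise separated set, and $h_{\mathrm{top}}(f,\xi)=\sup_{\mathcal E}\limsup_n\frac1n\log S(n,\xi,\mathcal E)=\sup_{\mathcal E}\limsup_n\frac1n\log R(n,\xi,\mathcal E)$ (set to $-\infty$ if some $\xi_n$ is empty). *)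

From HB Require Import structures.
From mathcomp Require Import all_boot all_order all_algebra finmap.
From mathcomp Require Import all_classical all_reals all_analysis.
Set Implicit Arguments. Unset Strict Implicit. Unset Printing Implicit Defensive.
Import Order.TTheory GRing.Theory Num.Theory.
Local Open Scope classical_set_scope.
Local Open Scope ring_scope.


Section Defs.
Context {X : topologicalType}.

(* Entourages of the canonical uniform structure of a compact Hausdorff space:
   the neighbourhoods of the diagonal in X * X (product topology). *)
Definition entourage_diag (E : set (X * X)) : Prop :=
  exists U : set (X * X), open U /\ (forall x, U (x, x)) /\ U `<=` E.

Definition symmetric_ent (E : set (X * X)) : Prop :=
  forall x y, E (x, y) -> E (y, x).

Definition comp_ent (E1 E2 : set (X * X)) : set (X * X) :=
  [set p | exists z, E1 (p.1, z) /\ E2 (z, p.2)].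

(* partially continuous self-map: f is only meaningful on X \ I; the values of
   the total function f on I are irrelevant. *)
Definition partially_continuous (I : set X) (f : X -> X) : Prop :=
  closed I /\ {within ~` I, continuous f}.

Definition admissible (I : set X) (f : X -> X) (xi : nat -> set X) : Prop :=
  (forall n, xi n `<=` ~` I) /\ (forall n, f @` xi n.+1 `<=` xi n).

Fixpoint xi_max (I : set X) (f : X -> X) (n : nat) : set X :=
  match n with
  | 0 => setT
  | m.+1 => [set x | ~ I x /\ xi_max I f m (f x)]
  end.

Definition bowen_ball (I : set X) (f : X -> X) (n : nat) (E : set (X * X))
  (x : X) : set X :=
  [set y | xi_max I f n y /\ forall i, (i <= n)%N -> E (iter i f x, iter i f y)].

Definition separated_set (I : set X) (f : X -> X) (xi : nat -> set X) (n : nat)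
  (E : set (X * X)) (F : {fset X}) : Prop :=
  [set` F] `<=` xi n /\
  forall x y, x \in F -> y \in F -> x <> y -> ~ bowen_ball I f n E y x.

Definition covering_set (I : set X) (f : X -> X) (xi : nat -> set X) (n : nat)
  (E : set (X * X)) (F : {fset X}) : Prop :=
  [set` F] `<=` xi n /\
  xi n `<=` \bigcup_(x in [set` F]) bowen_ball I f n E x.

Variable R : realType.

Definition S_sep (I : set X) (f : X -> X) (xi : nat -> set X) (n : nat)
  (E : set (X * X)) : \bar R :=
  ereal_sup [set ((#|` F|)%fset%:R)%:E | F in separated_set I f xi n E].

(* R(n,xi,E): minimal cardinality of a (finite) covering set (+oo if none). *)
Definition R_cov (I : set X) (f : X -> X) (xi : nat -> set X) (n : nat)
  (E : set (X * X)) : \bar R :=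
  ereal_inf [set ((#|` F|)%fset%:R)%:E | F in covering_set I f xi n E].

Definition elog (x : \bar R) : \bar R :=
  match x with
  | r%:E => if r <= 0 then -oo%E else (ln r)%:E
  | +oo%E => +oo%E
  | -oo%E => -oo%E
  end.

Definition htop (I : set X) (f : X -> X) (xi : nat -> set X) : \bar R :=
  if `[< exists n, xi n = set0 >] then -oo%E
  else ereal_sup [set limn_esup (fun n => ((n%:R)^-1)%:E * elog (S_sep I f xi n E))%E
                 | E in entourage_diag].

End Defs.

From HB Require Import structures.
From mathcomp Require Import all_boot all_order all_algebra finmap.
From mathcomp Require Import all_classical all_reals all_analysis.
Set Implicit Arguments. Unset Strict Implicit. Unset Printing Implicit Defensive.
Import Order.TTheory GRing.Theory Num.Theory.
Local Open Scope classical_set_scope.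
Local Open Scope ring_scope.

(* A point y of xi_n lies in the closure of xi'_n, and the first n iterates
   of f avoid I(f), hence are continuous at y; so some z in xi'_n has its
   orbit segment W-close to that of y. Replacing points by such shadows turns
   coverings of xi'_n into coverings of xi_n and separated subsets of xi_n into
   separated subsets of xi'_n, at the cost of composing entourages. For the
   entropy, every neighbourhood E of the diagonal must contain W o W o W for
   some such W: this is where compactness of the Hausdorff space X enters. *)

Section diagonal_neighbourhoods.
Context {X : topologicalType}.

Lemma open_setX (A B : set X) : open A -> open B -> open (A `*` B).
Proof.
move=> oA oB; rewrite openE => -[a b] [/= Aa Bb].
by exists (A, B) => //=; split; apply: open_nbhs_nbhs.
Qed.

Lemma open_diag_square (U : set (X * X)) (a : X) : open U -> U (a, a) ->
  exists2 N, nbhs a N & N `*` N `<=` U.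
Proof.
rewrite openE => oU Uaa; have [[P Q] [/= Pa Qa] PQU] := oU _ Uaa.
exists (P `&` Q); first exact: filterI.
by move=> [u v] [[/= Pu _] [_ Qv]]; apply: PQU.
Qed.

Lemma entourage_diag_refl (E : set (X * X)) : entourage_diag E -> forall x, E (x, x).
Proof. by move=> [U [_ [dU UE]]] x; apply: UE. Qed.

Section compact_hausdorff.
Hypotheses (hX : hausdorff_space X) (cX : compact [set: X]).

Lemma open_closure_sub (x : X) (A : set X) : nbhs x A ->
  exists2 B, open_nbhs x B & closure B `<=` A.
Proof.
move=> nA; have [N nN clNA] := compact_regular hX cX filterT nA.
exists N°; last by apply: subset_trans clNA; apply: closureS; exact: interior_subset.
by split; [exact: open_interior | apply: nbhs_singleton; exact: nbhs_interior].
Qed.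

(* Nested neighbourhoods [closure B1 `<=` B2], [closure B2 `<=` A] of [x] force
   both [V]-steps from a point of [B1] to stay in [A], while [V] still covers
   the diagonal. *)
Lemma open_diag_split_near (U : set (X * X)) (x : X) :
  open U -> (forall y, U (y, y)) ->
  exists2 N, nbhs x N & exists2 V : set (X * X), open V /\ (forall y, V (y, y)) &
    forall a b c, N a -> V (a, b) -> V (b, c) -> U (a, c).
Proof.
move=> oU dU; have [N nN NNU] := open_diag_square oU (dU x).
pose A := N°; have oA : open A := @open_interior _ N.
have [B2 [oB2 B2x] clB2A] := open_closure_sub (nbhs_interior nN).
have [B1 [oB1 B1x] clB1B2] := open_closure_sub (open_nbhs_nbhs (conj oB2 B2x)).
have B2A : B2 `<=` A := subset_trans (@subset_closure _ B2) clB2A.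
pose M := A `\` closure B1; pose Q := ~` closure B2.
have oM : open M by apply: openI => //; exact/closed_openC/closed_closure.
have oQ : open Q by exact/closed_openC/closed_closure.
exists B1; first exact: open_nbhs_nbhs.
exists ((B2 `*` B2) `|` (M `*` M) `|` (Q `*` Q)).
  split; first by apply: openU; [apply: openU|]; apply: open_setX.
  move=> y; have [B2y|nB2y] := pselect (B2 y); first by left; left.
  have [Ay|nAy] := pselect (A y); last by right; split => /clB2A.
  by left; right; split; split => // /clB1B2.
move=> a b c B1a ab bc; have B2a := clB1B2 _ (subset_closure B1a).
have B2b : B2 b.
  by case: ab => [[[]//|[[_ /(_ (subset_closure B1a))]]//]|[/(_ (subset_closure B2a))]].
have Ac : A c.
  by case: bc => [[[_ /B2A]//|[_ []]//]|[/(_ (subset_closure B2b))]].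
by apply: NNU; split; apply: interior_subset => //; exact: B2A.
Qed.

(* The near-covering form of compactness makes the [V] of
   [open_diag_split_near] independent of [x]. *)
Lemma open_diag_split (U : set (X * X)) : open U -> (forall y, U (y, y)) ->
  exists W : set (X * X), [/\ open W, (forall y, W (y, y)) & comp_ent W W `<=` U].
Proof.
move=> oU dU.
pose G := filter_from [set V : set (X * X) | open V /\ forall y, V (y, y)]
  (fun V => [set W | W `<=` V]).
have FG : Filter G.
  apply: filter_from_filter; first by exists setT; split => //; exact: openT.
  move=> V1 V2 [oV1 dV1] [oV2 dV2]; exists (V1 `&` V2).
    by split; [exact: openI | move=> y; split].
  by move=> W WV; split => p /WV [].
pose P (W : set (X * X)) a := forall b c, W (a, b) -> W (b, c) -> U (a, c).
have [|V [oV dV] VP] := (compact_near_coveringP _).1 cX _ G P FG.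
  move=> x _; have [N nN [V [oV dV] NVU]] := open_diag_split_near x oU dU.
  exists (N, [set W | W `<=` V]); first by split => //=; exists V.
  move=> [a W] [/= Na WV]; rewrite /P => b c ab bc.
  exact: NVU Na (WV _ ab) (WV _ bc).
exists V; split => // -[a c] [b [ab bc]].
exact: (VP V (fun _ => id) a I b c ab bc).
Qed.

Lemma entourage_diag_split3 (E : set (X * X)) : entourage_diag E ->
  exists2 W : set (X * X), entourage_diag W &
    forall a b c d, W (a, b) -> W (b, c) -> W (c, d) -> E (a, d).
Proof.
move=> [U [oU [dU UE]]].
have [W1 [oW1 dW1 W1U]] := open_diag_split oU dU.
have [W2 [oW2 dW2 W2W1]] := open_diag_split oW1 dW1.
exists W2; first by exists W2; split => //; split.
move=> a b c d ab bc cd; apply: UE; apply: W1U; exists c; split.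
- by apply: W2W1; exists b.
- by apply: W2W1; exists d; split => //; exact: dW2.
Qed.

End compact_hausdorff.
End diagonal_neighbourhoods.

Section orbit_segments.
Context {X : topologicalType} (I : set X) (f : X -> X).

(* Both orders, as entourages are not assumed symmetric here. *)
Definition orbit_close (n : nat) (W : set (X * X)) (x z : X) : Prop :=
  forall i, (i <= n)%N -> W (iter i f x, iter i f z) /\ W (iter i f z, iter i f x).

Lemma admissible_sub_xi_max xi n : admissible I f xi -> xi n `<=` xi_max I f n.
Proof.
case=> xiI xif; elim: n => [|n IHn] x //= xix.
by split; [exact: xiI xix | apply: IHn; apply: xif; exists x].
Qed.

Lemma admissible_iter xi n i x : admissible I f xi -> (i <= n)%N ->
  xi n x -> xi (n - i)%N (iter i f x).
Proof.
move=> [_ xif]; elim: i => [|i IHi] lein xix; first by rewrite subn0.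
apply: xif; exists (iter i f x) => //.
by rewrite subnSK //; exact: IHi (ltnW lein) xix.
Qed.

Lemma admissible_iter_notin xi n i x : admissible I f xi -> (i <= n)%N ->
  xi n x -> ~ I (iter i f x).
Proof. by move=> adm lein /(admissible_iter adm lein); apply: adm.1. Qed.

Lemma admissible_set0_tail xi m k : admissible I f xi -> xi m = set0 ->
  (m <= k)%N -> xi k = set0.
Proof.
move=> adm xim0; elim: k => [|k IHk]; first by rewrite leqn0 => /eqP <-.
rewrite leq_eqVlt => /predU1P[<- // | /IHk xik0].
rewrite -subset0 => x xiSkx; suff : xi k (f x) by rewrite xik0.
by apply: adm.2; exists x.
Qed.

Lemma admissible_closure_set0 xi xi' N m : admissible I f xi' ->
  (forall n, (N <= n)%N -> closure (xi n) `<=` closure (xi' n)) ->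
  xi' m = set0 -> xi (maxn m N) = set0.
Proof.
move=> adm' clsub xi'm0; apply: closure_eq0; rewrite -subset0 -closure0.
rewrite -(admissible_set0_tail adm' xi'm0 (leq_maxl m N)).
exact/clsub/leq_maxr.
Qed.

Lemma continuous_iter_at (hf : partially_continuous I f) i x :
  (forall j, (j < i)%N -> ~ I (iter j f x)) -> {for x, continuous (iter i f)}.
Proof.
have fcont y : ~ I y -> {for y, continuous f}.
  case: hf => clI; rewrite continuous_open_subspace; last exact: closed_openC.
  by move=> + Iy; apply; rewrite inE.
elim: i => [|i IHi] notI; first exact: cvg_id.
apply: (continuous_comp (f := iter i f)); last exact/fcont/notI.
by apply: IHi => j ltji; apply: notI; exact: ltnW.
Qed.

Lemma nbhs_orbit_close (hf : partially_continuous I f) n W x :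
  entourage_diag W -> (forall j, (j <= n)%N -> ~ I (iter j f x)) ->
  \forall z \near x, orbit_close n W x z.
Proof.
move=> [U [oU [dU UW]]] notI.
suff near_i i : (i <= n)%N -> \forall z \near x,
    W (iter i f x, iter i f z) /\ W (iter i f z, iter i f x).
  have near_all := @filter_forall X 'I_n.+1
    (fun i => [set z | W (iter i f x, iter i f z) /\ W (iter i f z, iter i f x)])
    (nbhs x) (nbhs_filter x) (fun i => near_i i (ltn_ord i)).
  exact: filterS (fun z closez i lein => closez (Ordinal lein)) near_all.
move=> lein; have [N Nfx NNU] := open_diag_square oU (dU (iter i f x)).
have : \forall z \near x, N (iter i f z).
  apply: (continuous_iter_at hf) => //.
  by move=> j ltji; apply: notI; exact: leq_trans (ltnW ltji) lein.
apply: filterS => z Nz; have Nx := nbhs_singleton Nfx.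
by split; apply: UW; apply: NNU.
Qed.

Lemma closure_sub_orbit_close (hf : partially_continuous I f) xi xi' n W y :
  admissible I f xi -> entourage_diag W -> closure (xi n) `<=` closure (xi' n) ->
  xi n y -> exists2 z, xi' n z & orbit_close n W y z.
Proof.
move=> adm entW clsub xiy.
have notI j : (j <= n)%N -> ~ I (iter j f y).
  by move=> lejn; exact: admissible_iter_notin adm lejn xiy.
have [z [xi'z closez]] :=
  clsub _ (subset_closure xiy) _ (nbhs_orbit_close hf entW notI).
by exists z.
Qed.

End orbit_segments.

Section transport.
Context {X : topologicalType} (I : set X) (f : X -> X).
Hypothesis hf : partially_continuous I f.
Variables (xi xi' : nat -> set X) (n : nat).
Hypotheses (adm : admissible I f xi) (clsub : closure (xi n) `<=` closure (xi' n)).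

Lemma covering_set_transport E E' E'' F' :
  entourage_diag E'' -> symmetric_ent E' ->
  comp_ent E' E' `<=` E -> comp_ent E'' E'' `<=` E' ->
  covering_set I f xi' n E'' F' ->
  exists2 F, covering_set I f xi n E F & (#|` F| <= #|` F'|)%N.
Proof.
move=> entE'' symE' E'E E''E' [_ F'cov].
have [[y0 xiy0]|xi0] := pselect (exists y, xi n y); last first.
  exists fset0%fset => //; split => [y|y xiy]; first by rewrite /= inE.
  by case: xi0; exists y.
pose g x' := xget y0 [set y | xi n y /\ bowen_ball I f n E' x' y].
exists [fset g x' | x' in F']%fset; last exact: leq_imfset_card.
split; first by move=> _ /imfsetP[x' _ ->]; rewrite /g; case: xgetP => [y _ []|_].
move=> y xiy; have [z xi'z closez] := closure_sub_orbit_close hf adm entE'' clsub xiy.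
have [x' F'x' [_ x'z]] := F'cov _ xi'z.
have x'y i : (i <= n)%N -> E' (iter i f x', iter i f y).
  move=> lein; apply: E''E'; exists (iter i f z).
  by split; [exact: x'z | exact: (closez i lein).2].
have xiy_max := admissible_sub_xi_max adm xiy.
have [_ [_ x'gx']] : [set y | xi n y /\ bowen_ball I f n E' x' y] (g x').
  by apply: xgetPex; exists y; do 2 split => //.
exists (g x'); first by rewrite /= in_imfset.
split => // i lein; apply: E'E; exists (iter i f x').
by split; [apply: symE'; exact: x'gx' | exact: x'y].
Qed.

Lemma separated_set_transport E W F :
  entourage_diag W -> (forall a b c d, W (a, b) -> W (b, c) -> W (c, d) -> E (a, d)) ->
  separated_set I f xi n E F ->
  exists2 F', separated_set I f xi' n W F' & #|` F| = #|` F'|.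
Proof.
move=> entW W3E [Fxi Fsep].
pose g y := xget y [set z | xi' n z /\ orbit_close f n W y z].
have gP y : xi n y -> [set z | xi' n z /\ orbit_close f n W y z] (g y).
  move=> xiy; apply: xgetPex.
  by have [z] := closure_sub_orbit_close hf adm entW clsub xiy; exists z.
have g_close_eq x y : x \in F -> y \in F ->
    (forall i, (i <= n)%N -> W (iter i f (g y), iter i f (g x))) -> x = y.
  move=> Fx Fy gyx; apply: contrapT => neqxy; apply: (Fsep x y Fx Fy neqxy).
  split; first exact: admissible_sub_xi_max adm _ (Fxi _ Fx).
  move=> i lein; apply: (W3E _ (iter i f (g y)) (iter i f (g x))).
  - exact: ((gP y (Fxi _ Fy)).2 i lein).1.
  - exact: gyx.
  - exact: ((gP x (Fxi _ Fx)).2 i lein).2.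
exists [fset g x | x in F]%fset.
  split; first by move=> _ /imfsetP[x Fx ->]; exact: (gP x (Fxi _ Fx)).1.
  move=> _ _ /imfsetP[x Fx ->] /imfsetP[y Fy ->] neq [_ gyx].
  by apply: neq; congr g; exact: g_close_eq.
rewrite card_in_imfset // => x y Fx Fy gxy; apply: g_close_eq => // i _.
by rewrite gxy; exact: entourage_diag_refl.
Qed.

End transport.

Section limf_esup_monotone.
Variables (T : choiceType) (X : filteredType T) (R : realType).
Local Open Scope ereal_scope.

Lemma le_limf_esup (F : set_system X) (f g : X -> \bar R) : Filter F ->
  (\forall x \near F, f x <= g x) -> limf_esup f F <= limf_esup g F.
Proof.
move=> FF Ffg; apply: le_ereal_inf_tmp => _ [V FV <-].
apply: ge_ereal_inf; exists (ereal_sup (f @` (V `&` [set x | f x <= g x]))).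
  by exists (V `&` [set x | f x <= g x]) => //; exact: filterI.
apply: ge_ereal_sup => _ [x [Vx fgx] <-].
by apply: le_trans fgx _; apply: ereal_sup_ubound; exists x.
Qed.

End limf_esup_monotone.

Section entropy.
Variables (R : realType) (X : topologicalType) (I : set X) (f : X -> X).
Local Open Scope ereal_scope.

Lemma S_sep_le xi xi' n E E' :
  (forall F, separated_set I f xi n E F ->
     exists2 F', separated_set I f xi' n E' F' & (#|` F| <= #|` F'|)%N) ->
  S_sep R I f xi n E <= S_sep R I f xi' n E'.
Proof.
move=> transport; apply: ge_ereal_sup => _ [F /transport[F' sepF' leFF'] <-].
by apply: le_ereal_sup_tmp; exists #|` F'|%:R%:E; [exists F' | rewrite lee_fin ler_nat].
Qed.

Lemma R_cov_le xi xi' n E E' :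
  (forall F', covering_set I f xi' n E' F' ->
     exists2 F, covering_set I f xi n E F & (#|` F| <= #|` F'|)%N) ->
  R_cov R I f xi n E <= R_cov R I f xi' n E'.
Proof.
move=> transport; apply: le_ereal_inf_tmp => _ [F' /transport[F covF leFF'] <-].
by apply: ge_ereal_inf; exists #|` F|%:R%:E; [exists F | rewrite lee_fin ler_nat].
Qed.

Lemma S_sep_subset xi xi' n E : xi n `<=` xi' n ->
  S_sep R I f xi n E <= S_sep R I f xi' n E.
Proof.
move=> sub; apply: S_sep_le => F [Fxi Fsep]; exists F => //.
by split => //; exact: subset_trans sub.
Qed.

Lemma elog_le : {homo @elog R : x y / x <= y}.
Proof.
move=> [r| |] [s| |] //=; rewrite ?leNye ?leey //.
rewrite lee_fin => lers; case: ifPn => [_|r_gt0]; first exact: leNye.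
rewrite -ltNge in r_gt0; have s_gt0 := lt_le_trans r_gt0 lers.
by rewrite (leNgt s) s_gt0 /= lee_fin ler_ln ?posrE.
Qed.

Lemma htop_le_closure (hX : hausdorff_space X) (cX : compact [set: X])
  (hf : partially_continuous I f) xi xi' :
  admissible I f xi -> admissible I f xi' ->
  (exists N, forall n, (N <= n)%N -> closure (xi n) `<=` closure (xi' n)) ->
  htop R I f xi <= htop R I f xi'.
Proof.
move=> adm adm' [N clsub]; rewrite /htop.
case: asboolP => [_|xi_ne]; first exact: leNye.
case: asboolP => [[m xi'm0]|_].
  by case: xi_ne; exists (maxn m N); exact: admissible_closure_set0 adm' clsub xi'm0.
apply: ge_ereal_sup => _ [E entE <-].
have [W entW W3E] := entourage_diag_split3 hX cX entE.
apply: le_ereal_sup_tmp; exists (limn_esup (fun n =>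
  ((n%:R)^-1)%:E * elog (S_sep R I f xi' n W))); first by exists W.
apply: le_limf_esup; exists N => // n /= leNn.
apply: lee_wpmul2l; first by rewrite lee_fin invr_ge0 ler0n.
apply/elog_le/S_sep_le => F sepF.
have [F' sepF' ->] := separated_set_transport hf adm (clsub n leNn) entW W3E sepF.
by exists F'.
Qed.

End entropy.

Theorem lemma1p12 (R : realType) (X : topologicalType)
  (hX : hausdorff_space X) (cX : compact [set: X])
  (I : set X) (f : X -> X) (hf : partially_continuous I f)
  (xi xi' : nat -> set X) (hxi : admissible I f xi) (hxi' : admissible I f xi') :
  (forall (E E' E'' : set (X * X)) (n : nat),
      entourage_diag E -> entourage_diag E' -> entourage_diag E'' ->
      symmetric_ent E -> symmetric_ent E' -> symmetric_ent E'' ->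
      comp_ent E' E' `<=` E -> comp_ent E'' E'' `<=` E' ->
      (xi n `<=` xi' n -> (S_sep R I f xi n E <= S_sep R I f xi' n E)%E) /\
      (closure (xi n) `<=` closure (xi' n) ->
         (R_cov R I f xi n E <= R_cov R I f xi' n E'')%E)) /\
  ((exists N, forall n, (N <= n)%N -> closure (xi n) `<=` closure (xi' n)) ->
     (htop R I f xi <= htop R I f xi')%E).
Proof.
split; last exact: htop_le_closure.
move=> E E' E'' n _ _ entE'' _ symE' _ E'E E''E'; split; first exact: S_sep_subset.
move=> clsub; apply: R_cov_le => F'.
exact: (covering_set_transport hf hxi clsub entE'' symE' E'E E''E').
Qed.
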